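(* For $S\subseteq V$ let $\delta^-(S)$ be the set of fragments $(v_1,\dots,v_\ell)$ with $v_1\notin S$ and $\{v_1,\dots,v_\ell\}\cap S\neq\emptyset$, and for a fragment $F=(v_1,\dots,v_\ell)$ let $a_S(F)=|\{i\in\{1,\dots,\ell-1\}: v_i\notin S,\ v_{i+1}\in S\}|$. Then: (i) the fragment-incidence vector $x$ of every feasible solution satisfies $\sum_{F\in\delta^-(S)}x_F\ge\lceil\sum_{v\in S}q_v/Q\rceil$ for all $S\subseteq V$; (ii) for every $S\subseteq V$ and every $x\ge 0$, $\sum_{F}a_S(F)x_F\ge\sum_{F\in\delta^-(S)}x_F$, so the inequality in (i) implies the rounded capacity inequality $\sum_F a_S(F)x_F\ge\lceil\sum_{v\in S}q_v/Q\rceil$ for the same $S$.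
   Context: Instance data: a task set $V=\{1,\dots,n\}$, a depot $0$, $N=V\cup\{0\}$. For distinct $u,v\in N$ there are a travel time $t_{uv}\ge 0$ and travel cost $c_{uv}\ge0$. Each $v\in N$ has a duration $d_v\ge 0$, demand $q_v\ge 0$ and a time window $[\alpha_v,\beta_v]$; the depot has $d_0=q_0=0$, $[\alpha_0,\beta_0]=[0,T_{\max}]$. Vehicle capacity is $Q>0$ and there are $|K|$ vehicles. $D$ is a set of unordered pairs $\{u,v\}$ of distinct tasks, $V_D=\{v\in V:\exists \{u,v\}\in D\}$, each with nonnegative parameters $\delta^{\min}_{uv},\delta^{\max}_{uv},\delta^{\min}_{vu},\delta^{\max}_{vu}$; start times satisfy the dependency if either $b_u\le b_v$ and $\delta^{\min}_{uv}\le b_v-b_u\le\delta^{\max}_{uv}$, or $b_v\le b_u$ and $\delta^{\min}_{vu}\le b_u-b_v\le\delta^{\max}_{vu}$. A feasible solution consists of at most $|K|$ routes $(0,w_1,\dots,w_m,0)$ such that every task lies in exactly one route, each route has total demand at most $Q$, and there are start times $b_w\in[\alpha_w,\beta_w]$ with $b_{w_{i+1}}\ge b_{w_i}+d_{w_i}+t_{w_iw_{i+1}}$ and all pairs of $D$ satisfying their dependency. A fragment is a sequence $(v_1,\dots,v_\ell)$, $\ell\ge2$, with $v_1,v_\ell\in V_D\cup\{0\}$, intermediate nodes in $V\setminus V_D$, no task repeated, total demand of $v_1,\dots,v_{\ell-1}$ at most $Q$, admitting a time-feasible schedule. The fragments of a route are its maximal subsequences whose first and last elements are consecutive occurrences of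 nodes from $V_D\cup\{0\}$; the fragment-incidence vector $x$ (indexed by all fragments) has $x_F=1$ iff $F$ is a fragment of some route of the solution. *)

From HB Require Import structures.
From mathcomp Require Import all_boot all_order all_algebra.
From mathcomp Require Import boolp reals.
Set Implicit Arguments. Unset Strict Implicit. Unset Printing Implicit Defensive.
Import Order.TTheory GRing.Theory Num.Theory.
Local Open Scope ring_scope.

(* Nodes are 'I_n.+1 : node 0 (ord0) is the depot, nodes 1..n are the tasks V. *)
Record instance (R : realType) (n : nat) := Instance {
  tt   : 'I_n.+1 -> 'I_n.+1 -> R;   (* travel time t_uv *)
  cc   : 'I_n.+1 -> 'I_n.+1 -> R;   (* travel cost c_uv *)
  dur  : 'I_n.+1 -> R;
  dem  : 'I_n.+1 -> R;
  alpha : 'I_n.+1 -> R;             (* window start *)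
  beta  : 'I_n.+1 -> R;             (* window end *)
  Tmax : R;
  cap  : R;
  nveh : nat;
  Drel : rel 'I_n.+1;                (* D, as a symmetric relation: {u,v} in D iff Drel u v *)
  dmin : 'I_n.+1 -> 'I_n.+1 -> R;
  dmax : 'I_n.+1 -> 'I_n.+1 -> R
}.

Section Defs.
Variables (R : realType) (n : nat) (I : instance R n).
Local Notation node := 'I_n.+1.

Definition is_task (v : node) : bool := v != ord0.

Definition wf_instance : Prop :=
  [/\ (forall u v : node, u != v -> 0 <= tt I u v /\ 0 <= cc I u v),
      (forall v : node, 0 <= dur I v /\ 0 <= dem I v),
      [/\ dur I ord0 = 0, dem I ord0 = 0, alpha I ord0 = 0 & beta I ord0 = Tmax I],
      0 < cap I &
      [/\ (forall u v, Drel I u v = Drel I v u),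
          (forall u v, Drel I u v -> u != v /\ is_task u /\ is_task v) &
          (forall u v, Drel I u v -> 0 <= dmin I u v /\ 0 <= dmax I u v)]].

Definition inVD (v : node) : bool := [exists u, Drel I u v].
Definition special (v : node) : bool := (v == ord0) || inVD v.

Definition sched_ok (p : seq node) (tm : seq R) : Prop :=
  [/\ size tm = size p,
      (forall i, (i < size p)%N ->
         alpha I (nth ord0 p i) <= nth 0 tm i <= beta I (nth ord0 p i)) &
      (forall i, (i.+1 < size p)%N ->
         nth 0 tm i + dur I (nth ord0 p i) + tt I (nth ord0 p i) (nth ord0 p i.+1)
           <= nth 0 tm i.+1)].

Definition is_fragment (F : seq node) : Prop :=
  [/\ (2 <= size F)%N /\ special (head ord0 F) && special (last ord0 F),
      (forall i, (0 < i < (size F).-1)%N ->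
          is_task (nth ord0 F i) && ~~ inVD (nth ord0 F i)),
      uniq [seq v <- F | is_task v],
      \sum_(i < (size F).-1) dem I (nth ord0 F i) <= cap I &
      exists tm, sched_ok F tm].

Definition route_nodes (r : seq node) : seq node := ord0 :: rcons r ord0.

Definition frag_of_route (r : seq node) (F : seq node) : Prop :=
  let p := route_nodes r in
  exists i j, [/\ (i < j < size p)%N,
                  special (nth ord0 p i), special (nth ord0 p j),
                  (forall k, (i < k < j)%N -> ~~ special (nth ord0 p k)) &
                  F = take (j - i).+1 (drop i p)].

Definition dep_ok (b : node -> R) (u v : node) : Prop :=
  (b u <= b v /\ dmin I u v <= b v - b u <= dmax I u v) \/
  (b v <= b u /\ dmin I v u <= b u - b v <= dmax I v u).

(* a solution is a list of routes, each given by its (nonempty) list of tasks *)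
Definition feasible (sol : seq (seq node)) : Prop :=
  [/\ (size sol <= nveh I)%N,
      (forall r, r \in sol -> r != [::] /\ all is_task r),
      (forall v, is_task v -> count_mem v (flatten sol) = 1%N),
      (forall r, r \in sol -> \sum_(w <- r) dem I w <= cap I) &
      exists b : node -> R,
        (forall r, r \in sol -> exists tm, sched_ok (route_nodes r) tm /\
            (forall i, (0 < i <= size r)%N ->
               nth 0 tm i = b (nth ord0 (route_nodes r) i))) /\
        (forall u v, Drel I u v -> dep_ok b u v)].

End Defs.

Fixpoint allseqs (n k : nat) : seq (seq 'I_n.+1) :=
  match k with
  | 0 => [:: [::]]
  | k'.+1 => [::] :: [seq a :: s | a <- enum 'I_n.+1, s <- allseqs n k']
  end.

Section Defs2.
Variables (R : realType) (n : nat) (I : instance R n).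
Local Notation node := 'I_n.+1.

(* The (finite) list of all fragments; fragments have length <= n + 2. *)
Definition fragments : seq (seq node) :=
  undup [seq F <- allseqs n n.+3 | `[< is_fragment I F >] ].

Definition incidence (sol : seq (seq node)) (F : seq node) : R :=
  if `[< exists r, r \in sol /\ frag_of_route I r F >] then 1 else 0.

Definition in_dminus (S : {set node}) (F : seq node) : bool :=
  (head ord0 F \notin S) && has (fun v => v \in S) F.

Definition aS (S : {set node}) (F : seq node) : nat :=
  count (fun p : node * node => (p.1 \notin S) && (p.2 \in S)) (zip F (behead F)).

End Defs2.

(* Every route that visits S has a first visit to S; the fragment of that route
   containing the step into S starts outside S, so it lies in delta^-(S).  Such
   a fragment contains a task of S, which belongs to exactly one route, so the
   fragment determines its route.  Hence the demand of S is split among the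
   fragments of delta^-(S) used by the solution, each carrying at most the load
   of one route, i.e. at most Q; the number of these fragments is an integer,
   which gives the rounded bound.  For (ii), a fragment of delta^-(S) starts
   outside S and visits S, so it has at least one step into S: a_S(F) >= 1. *)
From HB Require Import structures.
From mathcomp Require Import all_boot all_order all_algebra.
From mathcomp Require Import boolp reals.
From mathcomp Require Import zify.
Import Order.TTheory GRing.Theory Num.Theory.
Set Implicit Arguments. Unset Strict Implicit. Unset Printing Implicit Defensive.
Local Open Scope ring_scope.

Lemma nth_take_drop (T : Type) (x0 : T) (s : seq T) i m t :
  (t < m)%N -> nth x0 (take m (drop i s)) t = nth x0 s (i + t).
Proof. by move=> tm; rewrite nth_take // nth_drop. Qed.

Lemma size_take_drop (T : Type) (s : seq T) i m :
  (i + m <= size s)%N -> size (take m (drop i s)) = m.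
Proof. by move=> h; rewrite size_takel // size_drop; lia. Qed.

Lemma mem_allseqs n k (s : seq 'I_n.+1) : (size s <= k)%N -> s \in allseqs n k.
Proof.
elim: k s => [|k IH] [|a s] //= h; rewrite ?inE ?eqxx //.
apply/orP; right; apply: allpairs_f; first by rewrite mem_enum.
exact: IH.
Qed.

Lemma count_flatten_rem (T : eqType) (v : T) (ss : seq (seq T)) (s : seq T) :
  s \in ss -> count_mem v (flatten ss) = (count_mem v s + count_mem v (flatten (rem s ss)))%N.
Proof.
by move=> sss; rewrite !count_flatten !sumnE !big_map (perm_big _ (perm_to_rem sss)) big_cons.
Qed.

Lemma count_entries_gt0 (T : Type) (A : pred T) (a : T) (s : seq T) :
  ~~ A a -> has A s -> (0 < count (fun p : T * T => ~~ A p.1 && A p.2) (zip (a :: s) s))%N.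
Proof.
elim: s a => [//|b s IH] a Aa /= hAs.
case: (boolP (A b)) => Ab; first by rewrite Aa.
by move: hAs; rewrite (negbTE Ab) /= => /(IH b Ab); rewrite andbF.
Qed.

Lemma ler_sum_subseq (R : numDomainType) (T : eqType) (f : T -> R) (s r : seq T) :
  (forall x, 0 <= f x) -> subseq s r -> \sum_(x <- s) f x <= \sum_(x <- r) f x.
Proof.
move=> f_ge0; elim: r s => [|y r IH] [|x s] //=; rewrite ?big_nil //.
- by move=> _; apply: sumr_ge0.
- case: eqP => [-> h|_ h]; first by rewrite !big_cons lerD2l; apply: IH.
  by rewrite [leRHS]big_cons; apply: le_trans (IH _ h) _; rewrite lerDr.
Qed.

Lemma ler_sum_fibers_count (R : numDomainType) (T : finType) (U : eqType)
    (A : {pred T}) (w : T -> R) (f : T -> U) (s : seq U) (P : pred U) (c : R) :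
  uniq s -> (forall x, x \in A -> (f x \in s) && P (f x)) ->
  (forall y, \sum_(x in A | f x == y) w x <= c) ->
  \sum_(x in A) w x <= (count P s)%:R * c.
Proof.
move=> us fA fiber_le.
have -> : \sum_(x in A) w x = \sum_(y <- s | P y) \sum_(x in A | f x == y) w x.
  under [RHS]eq_bigr do rewrite big_mkcondr.
  rewrite exchange_big /=; apply: eq_bigr => x xA.
  rewrite -big_mkcondr big_const_seq iter_addr_0.
  have /andP[fxs Pfx] := fA x xA.
  rewrite (@eq_count _ _ (pred1 (f x))) ?count_uniq_mem ?fxs //.
  by move=> y /=; case: (eqVneq (f x) y) => [<-|_]; rewrite ?Pfx ?andbF.
apply: le_trans (ler_sum _ (fun y _ => fiber_le y)) _.
by rewrite big_const_seq iter_addr_0 mulr_natl.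
Qed.

Lemma ceil_div_le_nat (R : archiRealFieldType) (a c : R) (k : nat) :
  0 < c -> a <= k%:R * c -> (Num.ceil (a / c))%:~R <= k%:R :> R.
Proof. by move=> c_gt0 h; rewrite -[k%:R]/((k%:Z)%:~R) ler_int ceil_le_int ler_pdivrMr. Qed.

Section Fragments.
Variables (R : realType) (n : nat) (I : instance R n).
Local Notation node := 'I_n.+1.

Lemma frag_of_route_sub (r F : seq node) :
  frag_of_route I r F -> {subset F <= route_nodes r}.
Proof. by move=> [i [j [_ _ _ _ ->]]] x /mem_take /mem_drop. Qed.

Lemma filter_task_route_nodes (r : seq node) :
  all (@is_task n) r -> [seq v <- route_nodes r | is_task v] = r.
Proof. by move=> r_tasks; rewrite /= filter_rcons /is_task eqxx /=; apply/all_filterP. Qed.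

Lemma size_tasks_le (r : seq node) : all (@is_task n) r -> uniq r -> (size r <= n)%N.
Proof.
move=> r_tasks ur.
have u0r : uniq (ord0 :: r).
  rewrite /= ur andbT; apply/negP => /(allP r_tasks).
  by rewrite /is_task eqxx.
by have := max_card (mem (ord0 :: r)); rewrite (card_uniqP u0r) card_ord.
Qed.

Lemma mem_fragments (F : seq node) : F \in fragments I -> is_fragment I F.
Proof. by rewrite mem_undup mem_filter => /andP[/asboolP]. Qed.

Lemma sum_incidence_dminus (sol : seq (seq node)) (S : {set node}) :
  \sum_(F <- fragments I | in_dminus S F) incidence I sol F
  = (count (fun F => in_dminus S F && (incidence I sol F == 1)) (fragments I))%:R.
Proof.
rewrite (eq_bigr (fun F => if incidence I sol F == 1 then 1 else 0)); last first.
  by move=> F _; rewrite /incidence; case: ifP; rewrite ?eqxx // eq_sym oner_eq0.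
by rewrite -big_mkcondr big_const_seq iter_addr_0.
Qed.

Lemma incidence_frag_of_route (sol : seq (seq node)) (r F : seq node) :
  r \in sol -> frag_of_route I r F -> incidence I sol F = 1.
Proof. by move=> rsol frF; rewrite /incidence asboolT //; exists r. Qed.

Lemma aS_gt0 (S : {set node}) (F : seq node) : in_dminus S F -> (0 < aS S F)%N.
Proof.
case: F => [|a s] /andP[/= aS]; first by [].
by rewrite (negbTE aS) => /(@count_entries_gt0 _ (fun v => v \in S) a s aS).
Qed.

Lemma sum_dminus_le_sum_aS (S : {set node}) (x : seq node -> R) :
  (forall F, is_fragment I F -> 0 <= x F) ->
  \sum_(F <- fragments I | in_dminus S F) x F <= \sum_(F <- fragments I) (aS S F)%:R * x F.
Proof.
move=> x_ge0; rewrite big_mkcond !big_seq; apply: ler_sum => F /mem_fragments/x_ge0 xF.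
case: ifP => [/aS_gt0 aS_pos|_]; last exact: mulr_ge0.
by apply: ler_peMl; rewrite // ler1n.
Qed.

Lemma frag_of_route_dminus (r : seq node) (S : {set node}) :
  ord0 \notin S -> has (fun v => v \in S) r -> exists F, frag_of_route I r F /\ in_dminus S F.
Proof.
(* Take k the first position of the route in S, i the last special node before
   k and j the first special node at or after k. *)
move=> S0 hasr; set p := route_nodes r.
have sp : size p = (size r).+2 by rewrite /p /route_nodes /= size_rcons.
have exk : exists k, (k < size p)%N && (nth ord0 p k \in S).
  case/hasP: hasr => v vr vS; exists (index v r).+1.
  have ivr : (index v r < size r)%N by rewrite index_mem.
  rewrite /p /route_nodes /= size_rcons nth_rcons ivr nth_index // vS andbT; lia.
case: (ex_minnP exk) => k /andP[kp kS] kmin.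
have k_gt0 : (0 < k)%N by case: k kS {kmin kp} => //; rewrite (negbTE S0).
have exi : exists i, (i < k)%N && special I (nth ord0 p i).
  by exists 0%N; rewrite k_gt0 /special eqxx.
have i_le_k i : (i < k)%N && special I (nth ord0 p i) -> (i <= k)%N.
  by case/andP=> /ltnW.
case: (ex_maxnP exi i_le_k) => i /andP[ik ispec] imax.
have exj : exists j, (k <= j < size p)%N && special I (nth ord0 p j).
  exists (size p).-1; rewrite /special nth_last /p /route_nodes /= last_rcons eqxx.
  by rewrite andbT size_rcons -sp; apply/andP; split; lia.
case: (ex_minnP exj) => j /andP[/andP[kj jp] jspec] jmin.
exists (take (j - i).+1 (drop i p)); split.
  exists i, j; rewrite -/p; split => //; first by apply/andP; split; lia.
  move=> k' /andP[ik' k'j]; apply/negP => spk.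
  case: (ltnP k' k) => hk.
    have /imax : (k' < k)%N && special I (nth ord0 p k') by rewrite hk spk.
    by rewrite leqNgt ik'.
  have /jmin : (k <= k' < size p)%N && special I (nth ord0 p k').
    by rewrite hk spk (ltn_trans k'j jp).
  by rewrite leqNgt k'j.
apply/andP; split.
  rewrite -nth0 nth_take_drop // addn0; apply/negP => iS.
  have /kmin : (i < size p)%N && (nth ord0 p i \in S) by rewrite iS (ltn_trans ik kp).
  by rewrite leqNgt ik.
apply/hasP; exists (nth ord0 p k) => //.
have -> : nth ord0 p k = nth ord0 (take (j - i).+1 (drop i p)) (k - i).
  by rewrite nth_take_drop; [congr nth; lia | lia].
apply: mem_nth; rewrite size_take_drop; first lia.
by rewrite (_ : i + _ = j.+1)%N; last lia.
Qed.

Section WellFormed.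
Hypothesis wfI : wf_instance I.

Let dem_ge0 (v : node) : 0 <= dem I v.
Proof. by case: wfI => _ /(_ v)[]. Qed.

Let dem_depot : dem I ord0 = 0.
Proof. by case: wfI => _ _ []. Qed.

Lemma sum_dem_filter_task (s : seq node) :
  \sum_(w <- [seq v <- s | is_task v]) dem I w = \sum_(w <- s) dem I w.
Proof.
rewrite big_filter big_mkcond; apply: eq_bigr => w _.
by case: ifP => // /negbT; rewrite negbK => /eqP ->; rewrite dem_depot.
Qed.

Lemma frag_of_route_is_fragment (r F : seq node) :
  all (@is_task n) r -> uniq r -> \sum_(w <- r) dem I w <= cap I ->
  (exists tm, sched_ok I (route_nodes r) tm) ->
  frag_of_route I r F -> is_fragment I F.
Proof.
move=> r_tasks ur r_cap [tm [stm tm_win tm_step]] [i [j [/andP[ij jp] spi spj mid eqF]]].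
subst F; set p := route_nodes r; set F := take (j - i).+1 (drop i p).
have ij_len : (i + (j - i).+1 <= size p)%N by rewrite (_ : i + _ = j.+1)%N; last lia.
have szF : size F = (j - i).+1 by rewrite size_take_drop.
have subF : subseq [seq v <- F | is_task v] r.
  rewrite -[X in subseq _ X](filter_task_route_nodes r_tasks) subseq_filter filter_all.
  apply: subseq_trans (filter_subseq _ _) _.
  exact: subseq_trans (take_subseq _ _) (drop_subseq _ _).
split.
- rewrite szF; split; first lia.
  apply/andP; split; first by rewrite -nth0 nth_take_drop // addn0.
  by rewrite -nth_last szF /= nth_take_drop // subnKC // ltnW.
- move=> t; rewrite szF => /andP[t_gt0 t_lt]; rewrite nth_take_drop; last lia.
  by move: (mid (i + t)); rewrite /special negb_or; apply; apply/andP; split; lia.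
- exact: subseq_uniq subF ur.
- apply: le_trans r_cap; rewrite szF /=.
  apply: (@le_trans _ _ (\sum_(t < (j - i).+1) dem I (nth ord0 F t))).
    by rewrite big_ord_recr lerDl.
  rewrite -(big_mkord xpredT (fun t => dem I (nth ord0 F t))).
  rewrite (_ : \sum_(0 <= t < _) _ = \sum_(w <- F) dem I w); last by rewrite (big_nth ord0) szF.
  by rewrite -sum_dem_filter_task; apply: ler_sum_subseq dem_ge0 subF.
- exists (take (j - i).+1 (drop i tm)); split.
  + by rewrite size_take_drop ?szF // stm.
  + by move=> t; rewrite szF => ht; rewrite !nth_take_drop //; apply: tm_win; lia.
  + move=> t; rewrite szF => ht; rewrite !nth_take_drop; try lia.
    by rewrite addnS; apply: tm_step; lia.
Qed.

Lemma frag_of_route_in_fragments (r F : seq node) :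
  all (@is_task n) r -> uniq r -> \sum_(w <- r) dem I w <= cap I ->
  (exists tm, sched_ok I (route_nodes r) tm) ->
  frag_of_route I r F -> F \in fragments I.
Proof.
move=> r_tasks ur r_cap r_sched frF.
rewrite mem_undup mem_filter; apply/andP; split.
  by apply/asboolP; apply: frag_of_route_is_fragment frF.
apply: mem_allseqs; have := size_tasks_le r_tasks ur.
case: frF => [i [j [_ _ _ _ ->]]].
have := size_subseq (subseq_trans (take_subseq (drop i (route_nodes r)) (j - i).+1)
                                  (drop_subseq _ i)).
by rewrite /route_nodes /= size_rcons; lia.
Qed.

Section Solution.
Variable sol : seq (seq node).
Hypothesis fsol : feasible I sol.

Lemma feasible_route_uniq (r : seq node) : r \in sol -> uniq r.
Proof.
move=> rsol; case: fsol => _ r_tasks once _ _.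
apply: count_mem_uniq => v; case: (boolP (v \in r)) => vr; last exact/count_memPn.
have vt : is_task v by apply: (allP (r_tasks r rsol).2).
have v_in_r : (0 < count_mem v r)%N by rewrite -has_count has_pred1.
by have := once v vt; rewrite (count_flatten_rem _ rsol); lia.
Qed.

Lemma feasible_task_route_unique (v : node) (r1 r2 : seq node) :
  is_task v -> r1 \in sol -> r2 \in sol -> v \in r1 -> v \in r2 -> r1 = r2.
Proof.
move=> vt r1sol r2sol vr1 vr2; apply/eqP/negPn/negP => r12.
have r2rem : r2 \in rem r1 sol by rewrite rem_mem // eq_sym.
have c1 : (0 < count_mem v r1)%N by rewrite -has_count has_pred1.
have c2 : (0 < count_mem v r2)%N by rewrite -has_count has_pred1.
case: fsol => _ _ /(_ v vt) + _ _.
by rewrite (count_flatten_rem _ r1sol) (count_flatten_rem _ r2rem); lia.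
Qed.

Lemma feasible_frag_in_fragments (r F : seq node) :
  r \in sol -> frag_of_route I r F -> F \in fragments I.
Proof.
move=> rsol; case: fsol => _ r_tasks _ r_cap [b [r_sched _]].
have [tm [tm_ok _]] := r_sched r rsol.
apply: frag_of_route_in_fragments (r_tasks r rsol).2 (feasible_route_uniq rsol) (r_cap r rsol) _.
by exists tm.
Qed.

Lemma dminus_frag_route_unique (S : {set node}) (F r1 r2 : seq node) :
  ord0 \notin S -> in_dminus S F -> r1 \in sol -> r2 \in sol ->
  frag_of_route I r1 F -> frag_of_route I r2 F -> r1 = r2.
Proof.
move=> S0 /andP[_ /hasP[u uF uS]] r1sol r2sol fr1 fr2.
have ut : is_task u by apply/eqP => u0; rewrite -u0 uS in S0.
have in_route r : frag_of_route I r F -> u \in r.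
  by move=> /frag_of_route_sub /(_ u uF); rewrite /route_nodes !inE mem_rcons !inE (negbTE ut).
exact: feasible_task_route_unique ut r1sol r2sol (in_route _ fr1) (in_route _ fr2).
Qed.

Lemma sum_dem_sub_route (P : pred node) (r : seq node) :
  r \in sol -> (forall v, P v -> v \in r) -> \sum_(v | P v) dem I v <= cap I.
Proof.
move=> rsol Pr; case: fsol => _ _ _ r_cap _.
apply: le_trans (r_cap r rsol); rewrite (big_uniq _ (feasible_route_uniq rsol)).
rewrite [leRHS]big_mkcond [leLHS]big_mkcond; apply: ler_sum => v _.
by case: ifP => [/Pr -> //|_]; case: ifP.
Qed.

Lemma entering_fragment (S : {set node}) (v : node) :
  ord0 \notin S -> v \in S ->
  exists F r, [/\ r \in sol, v \in r, frag_of_route I r F & in_dminus S F].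
Proof.
move=> S0 vS; have vt : is_task v by apply/eqP => v0; rewrite -v0 vS in S0.
case: fsol => _ _ once _ _.
have /flattenP[r rsol vr] : v \in flatten sol by rewrite -has_pred1 has_count (once v vt).
have [F [frF dF]] := frag_of_route_dminus S0 (introT hasP (ex_intro2 _ _ v vr vS)).
by exists F, r.
Qed.

Lemma fiber_dem_le_cap (S : {set node}) (f : node -> seq node) (F : seq node) :
  ord0 \notin S ->
  (forall v, v \in S -> in_dminus S (f v) /\
     exists2 r, r \in sol & v \in r /\ frag_of_route I r (f v)) ->
  \sum_(v in S | f v == F) dem I v <= cap I.
Proof.
move=> S0 hf.
have [v0 /andP[v0S /eqP fv0F] | fiber0] := pickP [pred v | (v \in S) && (f v == F)];
  last by rewrite big_pred0 // ltW //; case: wfI.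
have [dF [r0 r0sol [_ fr0]]] := hf v0 v0S; rewrite fv0F in dF fr0.
apply: (sum_dem_sub_route (P := fun v => (v \in S) && (f v == F)) r0sol).
move=> v /andP[vS /eqP fvF]; have [_ [r rsol [vr frF]]] := hf v vS.
by rewrite fvF in frF; rewrite (dminus_frag_route_unique S0 dF r0sol rsol fr0 frF).
Qed.

Lemma capacity_cut (S : {set node}) :
  ord0 \notin S ->
  (Num.ceil ((\sum_(v in S) dem I v) / cap I))%:~R
    <= \sum_(F <- fragments I | in_dminus S F) incidence I sol F.
Proof.
move=> S0.
have /choice[f hf] : forall v, exists F, v \in S -> in_dminus S F /\
    exists2 r, r \in sol & v \in r /\ frag_of_route I r F.
  move=> v; case: (boolP (v \in S)) => vS; last by exists [::].
  have [F [r [rsol vr frF dF]]] := entering_fragment S0 vS.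
  by exists F => _; split => //; exists r.
rewrite sum_incidence_dminus ceil_div_le_nat //; first by case: wfI.
apply: ler_sum_fibers_count (undup_uniq _) _ (fun F => fiber_dem_le_cap F S0 hf) => v vS.
have [dF [r rsol [_ frF]]] := hf v vS.
by rewrite dF (incidence_frag_of_route rsol frF) eqxx (feasible_frag_in_fragments rsol frF).
Qed.

End Solution.
End WellFormed.
End Fragments.

Unset Implicit Arguments. Set Strict Implicit. Set Printing Implicit Defensive.

Theorem mainTheorem9 (R : realType) (n : nat) (I : instance R n) :
  wf_instance I ->
  (forall sol : seq (seq 'I_n.+1), feasible I sol ->
     forall S : {set 'I_n.+1}, ord0 \notin S ->
       (Num.ceil ((\sum_(v in S) dem I v) / cap I))%:~R
         <= \sum_(F <- fragments I | in_dminus S F) incidence I sol F)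
  /\
  (forall S : {set 'I_n.+1}, ord0 \notin S ->
     forall x : seq 'I_n.+1 -> R, (forall F, is_fragment I F -> 0 <= x F) ->
       \sum_(F <- fragments I | in_dminus S F) x F
         <= \sum_(F <- fragments I) (aS S F)%:R * x F
       /\
       ((Num.ceil ((\sum_(v in S) dem I v) / cap I))%:~R
           <= \sum_(F <- fragments I | in_dminus S F) x F ->
        (Num.ceil ((\sum_(v in S) dem I v) / cap I))%:~R
           <= \sum_(F <- fragments I) (aS S F)%:R * x F)).
Proof.
move=> wfI; split=> [sol fsol S S0 | S _ x x_ge0]; first exact: capacity_cut.
have dminus_le_aS := sum_dminus_le_sum_aS S x_ge0.
by split=> // cut_ok; apply: le_trans dminus_le_aS.
Qed.
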